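(* Let $\mathbb{H}=\{z\in\mathbb{C}:\operatorname{Im}z>0\}$. For $z_1,z_2\in\mathbb{H}$ and $p\ge1$ let \[ U_p(z_1,z_2)=\frac{|z_1-z_2|}{\sqrt[p]{\alpha^p+\beta^p}},\quad \alpha=\sqrt{\operatorname{Im}(z_1)^2+c^2},\quad \beta=\sqrt{\operatorname{Im}(z_2)^2+c^2},\quad c=\frac{|\operatorname{Re}(z_1-z_2)|}{2}. \] Then $b_{\mathbb{H},p}(z_1,z_2)\ge U_p(z_1,z_2)$.
   Context: For $z_1,z_2\in\mathbb{H}$ and $p\ge1$, $b_{\mathbb{H},p}(z_1,z_2)=\sup_{t\in\mathbb{R}}\frac{|z_1-z_2|}{\sqrt[p]{|z_1-t|^p+|t-z_2|^p}}$. *)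

From Stdlib Require Import Reals.
From Coquelicot Require Import Coquelicot.
Open Scope R_scope.

Definition inH (z : C) : Prop := 0 < Im z.

Definition proot (p x : R) : R := Rpower x (/ p).

(* The quantity |z1 - z2| / (|z1 - t|^p + |t - z2|^p)^(1/p) for real t.
   For z1, z2 in H both moduli are > 0, so Rpower is the genuine power. *)
Definition b_ratio (p : R) (z1 z2 : C) (t : R) : R :=
  Cmod (z1 - z2)
  / proot p (Rpower (Cmod (z1 - RtoC t)) p + Rpower (Cmod (RtoC t - z2)) p).

Definition b_H (p : R) (z1 z2 : C) : Rbar :=
  Lub_Rbar (fun x => exists t : R, x = b_ratio p z1 z2 t).

Definition U_p (p : R) (z1 z2 : C) : R :=
  let c := Rabs (Re (z1 - z2)) / 2 in
  let alpha := sqrt (Im z1 ^ 2 + c ^ 2) in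
  let beta := sqrt (Im z2 ^ 2 + c ^ 2) in
  Cmod (z1 - z2) / proot p (Rpower alpha p + Rpower beta p).

(** The supremum defining [b_H] is at least its value at any single real
    point, and [U_p] is exactly the value at the midpoint
    [t = (Re z1 + Re z2) / 2]: there [|z1 - t|] and [|t - z2|] are the
    hypotenuses [alpha] and [beta] with horizontal leg
    [c = |Re (z1 - z2)| / 2]. *)

From Stdlib Require Import Reals.
From Coquelicot Require Import Coquelicot.
Open Scope R_scope.

Lemma Cmod_sub_RtoC (z : C) (t : R) :
  Cmod (z - RtoC t) = sqrt (Im z ^ 2 + (Re z - t) ^ 2).
Proof.
  destruct z as [a b]; unfold Cmod; simpl.
  f_equal; ring.
Qed.

Lemma Cmod_RtoC_sub (t : R) (z : C) :
  Cmod (RtoC t - z) = sqrt (Im z ^ 2 + (Re z - t) ^ 2).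
Proof.
  destruct z as [a b]; unfold Cmod; simpl.
  f_equal; ring.
Qed.

Lemma sqr_half_Rabs (x : R) : (Rabs x / 2) ^ 2 = (x / 2) ^ 2.
Proof.
  unfold Rdiv; rewrite !Rpow_mult_distr, pow2_abs; reflexivity.
Qed.

Definition Re_midpoint (z1 z2 : C) : R := (Re z1 + Re z2) / 2.

Lemma U_p_b_ratio_midpoint (p : R) (z1 z2 : C) :
  U_p p z1 z2 = b_ratio p z1 z2 (Re_midpoint z1 z2).
Proof.
  unfold U_p, b_ratio, Re_midpoint.
  rewrite Cmod_sub_RtoC, Cmod_RtoC_sub.
  rewrite sqr_half_Rabs; change (Re (z1 - z2)) with (Re z1 - Re z2).
  do 6 f_equal; field.
Qed.

Lemma b_ratio_le_b_H (p : R) (z1 z2 : C) (t : R) :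
  Rbar_le (b_ratio p z1 z2 t) (b_H p z1 z2).
Proof.
  apply (proj1 (Lub_Rbar_correct _)).
  exists t; reflexivity.
Qed.

(* The bound holds for all [p], [z1], [z2]. *)
Theorem theorem3p23 (p : R) (z1 z2 : C) :
  1 <= p -> inH z1 -> inH z2 ->
  Rbar_le (Finite (U_p p z1 z2)) (b_H p z1 z2).
Proof.
  intros _ _ _.
  rewrite U_p_b_ratio_midpoint.
  apply b_ratio_le_b_H.
Qed.
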